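(* Let $n\ge1$, $\delta\in[0,1]$, $\bm{u}^*\in\mathcal{S}^{n-1}$, let $\mathcal{P}_u'$ be an arbitrary distribution on $\mathcal{S}^{n-1}$, and let $\mathcal{P}_{\bm{a},b}$ be a distribution on $\mathbb{R}^n_+\times\mathbb{R}_+$ such that for some $\underline{a}>0$, $a_i\in[\underline{a},1]$ almost surely for all $i$. For $t=1,\dots,T$, let $(\bm{u}_t,\bm{a}_t,b_t)$ be i.i.d., with $(\bm{a}_t,b_t)\sim\mathcal{P}_{\bm{a},b}$ independent of $\bm{u}_t$, and $\bm{u}_t=\bm{u}^*$ with probability $1-\delta$ and $\bm{u}_t\sim\mathcal{P}_u'$ with probability $\delta$. For $\bm{u}\in\mathbb{R}^n$, $\bm{a}\in\mathbb{R}^n_+$, $b\in\mathbb{R}_+$, let $\mathrm{LP}(\bm{u},\bm{a},b)$ be the linear program $\max_{\bm{x}}\sum_i u_ix_i$ s.t. $\sum_i a_ix_i\le b$, $0\le x_i\le1$, and fix a selection $\bm{x}^{\mathrm{opt}}(\bm{u},\bm{a},b)$ of an optimal solution. Let $\bm{x}^*_t=\bm{x}^{\mathrm{opt}}(\bm{u}_t,\bm{a}_t,b_t)$ and $\bar{\bm{x}}^*_t=\bm{x}^{\mathrm{opt}}(\bm{u}^*,\bm{a}_t,b_t)$, and define $$\mathcal{U}_t=\{\bm{u}\in\mathcal{S}^{n-1}:\bm{x}^*_t\text{ is an optimal solution of }\mathrm{LP}(\bm{u},\bm{a}_t,b_t)\},\qquad \bar{\mathcal{U}}_t=\{\bm{u}\in\mathcal{S}^{n-1}:\bar{\bm{x}}^*_t\text{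 is an optimal solution of }\mathrm{LP}(\bm{u},\bm{a}_t,b_t)\}.$$ Then $$\mathbb{P}\left(\max_{\bm{u}\in\mathcal{S}^{n-1}}\left|\frac1T\sum_{t=1}^TI_{\mathcal{U}_t}(\bm{u})-\frac1T\sum_{t=1}^TI_{\bar{\mathcal{U}}_t}(\bm{u})\right|\le\delta+\frac{\log T}{\sqrt T}\right)\ge1-\frac1T.$$
   Context: $\mathcal{S}^{n-1}$ is the unit sphere in $\mathbb{R}^n$; $I_{\mathcal{E}}(e)=1$ if $e\in\mathcal{E}$ and $0$ otherwise. *)

From HB Require Import structures.
From mathcomp Require Import all_boot all_order all_algebra.
From mathcomp Require Import all_classical all_reals all_analysis.
Set Implicit Arguments. Unset Strict Implicit. Unset Printing Implicit Defensive.
Import Order.TTheory GRing.Theory Num.Theory.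
Local Open Scope classical_set_scope.
Local Open Scope ring_scope.

(* Vectors of R^n are represented as n.-tuple R, which carries the product
   (Borel) sigma-algebra in mathcomp-analysis. *)
Section LP.
Variables (R : realType) (n : nat).

Definition dotv (u x : n.-tuple R) : R := \sum_(i < n) tnth u i * tnth x i.

Definition unit_sphere : set (n.-tuple R) :=
  [set u | \sum_(i < n) tnth u i ^+ 2 = 1].

Definition lp_feasible (a : n.-tuple R) (b : R) (x : n.-tuple R) : Prop :=
  dotv a x <= b /\ forall i, 0 <= tnth x i <= 1.

Definition lp_optimal (u a : n.-tuple R) (b : R) (x : n.-tuple R) : Prop :=
  lp_feasible a b x /\ forall y, lp_feasible a b y -> dotv u y <= dotv u x.

Definition lp_selection (xopt : n.-tuple R -> n.-tuple R -> R -> n.-tuple R) :=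
  forall u a b, (forall i, 0 <= tnth a i) -> 0 <= b -> lp_optimal u a b (xopt u a b).
End LP.

(* Mutual independence of the family of random elements
   {X_1,...,X_T, Y_1,...,Y_T} (product rule for all measurable sets; taking
   whole spaces for some indices gives the product rule for every subfamily). *)
Definition indep_two_families (R : realType) d (Om : measurableType d)
  (P : probability Om R) dU (U : measurableType dU) dV (V : measurableType dV)
  (T : nat) (X : 'I_T -> Om -> U) (Y : 'I_T -> Om -> V) : Prop :=
  forall (A : 'I_T -> set U) (B : 'I_T -> set V),
    (forall t, measurable (A t)) -> (forall t, measurable (B t)) ->
    P ((\bigcap_(t in [set: 'I_T]) (X t @^-1` A t)) `&`
       (\bigcap_(t in [set: 'I_T]) (Y t @^-1` B t))) =
    ((\prod_(t < T) P (X t @^-1` A t)) * (\prod_(t < T) P (Y t @^-1` B t)))%E.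

From HB Require Import structures.
From mathcomp Require Import all_boot all_order all_algebra.
From mathcomp Require Import all_classical all_reals all_analysis.
From mathcomp Require Import ring lra.
Import Order.TTheory GRing.Theory Num.Theory.
Import numFieldNormedType.Exports.
Local Open Scope classical_set_scope.
Local Open Scope ring_scope.

(* These are independent
   Bernoulli(q) events with q <= delta.  Chernoff's bound combined with
   Hoeffding's lemma 1 - q + q e^l <= exp (q l + l^2/8), taken at
   l = 4 log T / sqrt T, shows that more than T (delta + log T / sqrt T)
   corruptions occur with probability at most exp (- 2 log^2 T) <= 1/T. *)

Section hoeffding_lemma.
Context {R : realType}.

Lemma ler0_is_derive_le_at0 (f df : R -> R) (x : R) :
  (forall y : R, is_derive y (1 : R) f (df y)) -> (forall y, 0 <= y -> df y <= 0) ->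
  0 <= x -> f x <= f 0.
Proof.
move=> fdf df_le0 x_ge0; rewrite -subr_le0.
have cf : {within `[0, x], continuous f}.
  apply: continuous_subspaceT => y; have [fy _] := fdf y.
  exact/differentiable_continuous/derivable1_diffP.
have [c /andP[c_ge0 _] ->] := MVT_segment x_ge0 (fun y _ => fdf y) cf.
by rewrite subr0 mulr_le0_ge0 ?df_le0.
Qed.

Variable p : R.
Hypothesis p01 : 0 <= p <= 1.

Let mgf (y : R) := 1 - p + p * expR y.

Let mgf_gt0 y : 0 < mgf y.
Proof. have := expR_gt0 y; rewrite /mgf; case/andP: p01 => ? ?; nra. Qed.

Let is_derive_mgf (y : R) : is_derive y (1 : R) mgf (p * expR y).
Proof.
apply: is_derive_eq (is_deriveD (is_derive_cst (1 - p) y 1)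
                                (is_deriveZ p (is_derive_expR y))) _.
by rewrite add0r.
Qed.

(* [g] is the derivative of [y |-> ln (mgf y) - p y - y^2/8]. *)
Let g (y : R) := p * expR y / mgf y - p - 4^-1 * y.

Let g_le0 x : 0 <= x -> g x <= 0.
Proof.
move=> x_ge0.
have g0 : g 0 = 0 by rewrite /g /mgf expR0 mulr1 subrK divr1 mulr0 subrr subr0.
suff : g x <= g 0 by rewrite g0.
apply: (@ler0_is_derive_le_at0 g
  (fun y => p * (1 - p) * expR y / mgf y ^+ 2 - 1 / 4)) => // [y|y _].
  have mgf_neq0 : mgf y != 0 by rewrite gt_eqF.
  apply: is_derive_eq (is_deriveB (is_deriveB (is_deriveM
    (is_deriveZ p (is_derive_expR y)) (is_deriveV mgf_neq0 (is_derive_mgf y)))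
    (is_derive_cst p y 1)) (is_deriveZ (4^-1) (@is_derive_id _ _ y 1))) _.
  have := mgf_gt0 y; rewrite /mgf /= /GRing.scale /= => mgf_pos; field; lra.
(* AM-GM: [4 (1 - p) (p e^y) <= ((1 - p) + p e^y)^2]. *)
have := sqr_ge0 (1 - p - p * expR y); have := mgf_gt0 y.
rewrite subr_le0 ler_pdivrMr ?exprn_gt0 // /mgf; nra.
Qed.

Lemma bernoulli_mgf_le_hoeffding l : 0 <= l ->
  1 - p + p * expR l <= expR (p * l + l ^+ 2 / 8).
Proof.
pose s y := - (p * y + 8^-1 * (y * y)).
have is_derive_s (y : R) : is_derive y (1 : R) s (- (p + y / 4)).
  apply: is_derive_eq (is_deriveN (is_deriveD (is_deriveZ p (@is_derive_id _ _ y 1))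
    (is_deriveZ (8^-1) (is_deriveM (@is_derive_id _ _ y 1)
      (@is_derive_id _ _ y 1))))) _.
  by rewrite /GRing.scale /=; field.
move=> l_ge0.
have -> : p * l + l ^+ 2 / 8 = - s l by rewrite /s opprK; field.
rewrite expRN -div1r ler_pdivlMr ?expR_gt0 //.
have mgf_exp_s0 : mgf 0 * expR (s 0) = 1.
  by rewrite /mgf /s expR0 !mulr0 mulr1 subrK addr0 oppr0 expR0 mulr1.
rewrite -[leRHS]mgf_exp_s0.
apply: (@ler0_is_derive_le_at0 (fun y => mgf y * expR (s y))
  (fun y => expR (s y) * (mgf y * g y))) => // [y|y y_ge0].
  apply: is_derive_eq (is_deriveM (is_derive_mgf y)
    (is_derive1_comp (is_derive_expR (s y)) (is_derive_s y))) _.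
  have := mgf_gt0 y; rewrite /g /mgf /GRing.scale /= => mgf_pos; field; lra.
by rewrite mulr_ge0_le0 ?expR_ge0 // mulr_ge0_le0 ?g_le0 // ltW.
Qed.

End hoeffding_lemma.

Section bernoulli_tail.
Context {R : realType} {I : finType}.
Implicit Types (q x : R) (f : {ffun I -> bool}).

Definition bernoulli_weight q f : R := \prod_i (if f i then q else 1 - q).

Lemma bernoulli_weight_ge0 q f : 0 <= q <= 1 -> 0 <= bernoulli_weight q f.
Proof. by case/andP=> q_ge0 q_le1; apply: prodr_ge0 => i _; case: (f i); lra. Qed.

Lemma sum_bernoulli_weightX q x :
  \sum_f bernoulli_weight q f * x ^+ #|[pred i | f i]| = (1 - q + q * x) ^+ #|I|.
Proof.
have weightX f : bernoulli_weight q f * x ^+ #|[pred i | f i]| =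
    \prod_i (if f i then q * x else 1 - q).
  rewrite -prodr_const (big_mkcond [pred i | f i]) -big_split /=.
  by apply: eq_bigr => i _; case: (f i); rewrite ?mulr1.
rewrite (eq_bigr _ (fun f _ => weightX f)).
rewrite -(bigA_distr_bigA (fun _ (b : bool) => if b then q * x else 1 - q)) /=.
by rewrite big_bool prodr_const /= [_ + (1 - q)]addrC.
Qed.

Lemma bernoulli_tail_chernoff q c l : 0 <= q <= 1 -> 0 <= l ->
  \sum_(f : {ffun I -> bool} | c < #|[pred i | f i]|%:R) bernoulli_weight q f
    <= expR (- (l * c)) * (1 - q + q * expR l) ^+ #|I|.
Proof.
move=> q01 l_ge0; rewrite -sum_bernoulli_weightX mulr_sumr.
rewrite [leRHS](bigID (fun f : {ffun I -> bool} => c < #|[pred i | f i]|%:R)) /=.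
rewrite -[leLHS]addr0 lerD //; last first.
  apply: sumr_ge0 => f _.
  by rewrite !mulr_ge0 ?expR_ge0 ?exprn_ge0 ?bernoulli_weight_ge0.
apply: ler_sum => f c_lt; rewrite mulrCA -expRM_natl -expRD.
rewrite ler_peMr ?bernoulli_weight_ge0 // -[leLHS]expR0 ler_expR.
by have := ltW c_lt; nra.
Qed.

Lemma bernoulli_tail_hoeffding q dl c l : 0 <= q <= dl -> dl <= 1 -> 0 <= l ->
  \sum_(f : {ffun I -> bool} | c < #|[pred i | f i]|%:R) bernoulli_weight q f
    <= expR (- (l * c)) * expR (dl * l + l ^+ 2 / 8) ^+ #|I|.
Proof.
move=> /andP[q_ge0 q_le] dl_le1 l_ge0.
have q01 : 0 <= q <= 1 by apply/andP; lra.
apply: le_trans (bernoulli_tail_chernoff q c l q01 l_ge0) _.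
have expR_ge1 : 1 <= expR l by rewrite -expR0 ler_expR.
rewrite ler_pM2l ?expR_gt0 // lerXn2r ?nnegrE ?expR_ge0 //;
  first by have := mulr_ge0 q_ge0 (expR_ge0 l); lra.
have dl01 : 0 <= dl <= 1 by apply/andP; lra.
apply: le_trans _ (bernoulli_mgf_le_hoeffding _ dl01 _ l_ge0).
have : 0 <= (dl - q) * (expR l - 1) by rewrite mulr_ge0 ?subr_ge0.
nra.
Qed.

End bernoulli_tail.

Lemma half_le_ln2 {R : realType} : 1 / 2 <= ln (2 : R).
Proof.
rewrite -ler_expR lnK ?posrE //.
have := expR_ge1Dx (- (1 / 2) : R); rewrite expRN.
have := expR_gt0 (1 / 2 : R); move: (expR _) => e e_gt0.
by move=> ?; have := mulfV (lt0r_neq0 e_gt0); nra.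
Qed.

Lemma bernoulli_tail_le_invn {R : realType} (T : nat) (q dl : R) :
  (2 <= T)%N -> 0 <= q <= dl -> dl <= 1 ->
  \sum_(f : {ffun 'I_T -> bool} |
          T%:R * (dl + ln T%:R / Num.sqrt T%:R) < #|[pred t | f t]|%:R)
     bernoulli_weight q f <= T%:R^-1.
Proof.
move=> T_ge2 q_le dl_le1.
have T_gt0 : (0 : R) < T%:R by rewrite ltr0n (leq_trans _ T_ge2).
have lnT_ge : 1 / 2 <= ln (T%:R : R).
  by apply: le_trans half_le_ln2 _; rewrite ler_ln ?posrE // ?ler_nat.
set L := ln _ in lnT_ge *; set s := Num.sqrt _.
have s_gt0 : 0 < s by rewrite sqrtr_gt0.
have sT : s ^+ 2 = T%:R by rewrite sqr_sqrtr // ltW.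
(* With [l = 4 L / s] and [c = s^2 (dl + L / s)] the exponent is [- 2 L^2 <= - L]. *)
have l_ge0 : 0 <= 4 * (L / s) by rewrite mulr_ge0 ?divr_ge0 // ltW //; lra.
apply: le_trans (bernoulli_tail_hoeffding _ _ _ _ q_le dl_le1 l_ge0) _.
rewrite card_ord -expRM_natl -expRD -[X in _ <= X^-1](lnK (x := T%:R)) ?posrE //.
rewrite -expRN ler_expR -/L -sT.
have -> : - (4 * (L / s) * (s ^+ 2 * (dl + L / s))) +
    s ^+ 2 * (dl * (4 * (L / s)) + (4 * (L / s)) ^+ 2 / 8) = - 2 * L ^+ 2.
  by field; rewrite lt0r_neq0.
nra.
Qed.

Lemma content_bigsetU_le {d} {T : ringOfSetsType d} {R : realFieldType}
    (mu : {content set T -> \bar R}) {I : Type} (s : seq I) (p : pred I)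
    (F : I -> set T) :
  (forall i, measurable (F i)) ->
  (mu (\big[setU/set0]_(i <- s | p i) F i) <= \sum_(i <- s | p i) mu (F i))%E.
Proof.
move=> mF; elim: s => [|i s IHs]; first by rewrite !big_nil measure0.
rewrite !big_cons; case: (p i) => //.
apply: le_trans (measureU2 _ _ _) (leeD2l _ IHs) => //.
exact: bigsetU_measurable.
Qed.

Lemma measurable_tuple_set1 d (T : measurableType d) (n : nat) (x : n.-tuple T) :
  (forall y : T, measurable [set y]) -> measurable [set x].
Proof.
move=> mT1.
have -> : [set x] = \bigcap_(i in [set: 'I_n]) ((@tnth n T)^~ i @^-1` [set tnth x i]).
  apply/seteqP; split=> [y -> i _ //|y yx].
  by apply: eq_from_tnth => i; exact: yx.
apply: fin_bigcap_measurable; first exact: finite_finset.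
by move=> i _; rewrite -[X in measurable X]setTI; exact: measurable_tnth.
Qed.

Lemma indep_two_families_fst (R : realType) d (Om : measurableType d)
    (P : probability Om R) dU (U : measurableType dU) dV (V : measurableType dV)
    (T : nat) (X : 'I_T -> Om -> U) (Y : 'I_T -> Om -> V) :
  indep_two_families P X Y ->
  forall A : 'I_T -> set U, (forall t, measurable (A t)) ->
  P (\bigcap_(t in [set: 'I_T]) X t @^-1` A t) = (\prod_(t < T) P (X t @^-1` A t))%E.
Proof.
move=> XY A mA.
have := XY A (fun=> setT) mA (fun=> measurableT).
rewrite [X in _ `&` X]bigcapT ?setIT => [->|t _]; last exact: preimage_setT.
by rewrite [X in (_ * X)%E]big1 ?mule1 // => t _; rewrite preimage_setT probability_setT.
Qed.

Section corruptions.
Context {R : realType} {d : measure_display} {Om : measurableType d} {n T : nat}.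
Variables (P : probability Om R) (delta : R) (ustar : n.-tuple R).
Variables (Pu' : probability (n.-tuple R) R) (u : 'I_T -> Om -> n.-tuple R).

Definition corruption_pattern (f : {ffun 'I_T -> bool}) : set Om :=
  \bigcap_(t in [set: 'I_T])
     u t @^-1` (if f t then ~` [set ustar] else [set ustar]).

Definition many_corruptions (c : R) : set Om :=
  \big[setU/set0]_(f : {ffun 'I_T -> bool} | c < #|[pred t | f t]|%:R)
     corruption_pattern f.

Lemma few_corruptions c w : ~ many_corruptions c w ->
  #|[pred t | u t w != ustar]|%:R <= c.
Proof.
move=> not_many; rewrite leNgt; apply/negP => c_lt; apply: not_many.
pose f := [ffun t => u t w != ustar].
have card_f : #|[pred t | f t]| = #|[pred t | u t w != ustar]|.
  by apply: eq_card => t; rewrite !inE ffunE.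
rewrite /many_corruptions (bigD1 f) /= ?card_f //; left=> t _ /=.
by rewrite ffunE; case: eqVneq => [|/eqP].
Qed.

Hypothesis measurable_u : forall t, measurable_fun setT (u t).

Let measurable_ustar : measurable [set ustar].
Proof. exact: measurable_tuple_set1. Qed.

Let measurable_ustar_pattern (b : bool) :
  measurable (if b then ~` [set ustar] else [set ustar]).
Proof. by case: b => //; exact: measurableC. Qed.

Let measurable_u_preimage t B : measurable B -> measurable (u t @^-1` B).
Proof. by move=> mB; rewrite -[X in measurable X]setTI; exact: measurable_u. Qed.

Lemma measurable_many_corruptions c : measurable (many_corruptions c).
Proof.
apply: bigsetU_measurable => f _.
apply: fin_bigcap_measurable; first exact: finite_finset.
by move=> t _; exact: measurable_u_preimage.
Qed.

Hypothesis delta01 : 0 <= delta <= 1.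
Hypothesis u_law : forall t B, measurable B ->
  P (u t @^-1` B) = ((1 - delta)%:E * \d_ustar B + delta%:E * Pu' B)%E.
Hypothesis u_indep : forall A : 'I_T -> set (n.-tuple R),
  (forall t, measurable (A t)) ->
  P (\bigcap_(t in [set: 'I_T]) u t @^-1` A t) = (\prod_(t < T) P (u t @^-1` A t))%E.

(* A corrupted draw may still equal [ustar], so [P (u t <> ustar)] is [q], not [delta]. *)
Let q := delta * (1 - fine (Pu' [set ustar])).

Let q_ge0_le_delta : 0 <= q <= delta.
Proof.
have m_ge0 : 0 <= fine (Pu' [set ustar]) := fine_ge0 (measure_ge0 _ _).
have m_le1 : fine (Pu' [set ustar]) <= 1.
  by rewrite -lee_fin fineK ?fin_num_measure ?probability_le1.
case/andP: delta01 => delta_ge0 _.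
by rewrite /q mulr_ge0 ?ler_piMr ?subr_ge0 ?gerBl.
Qed.

Let prob_u_pattern t (b : bool) :
  P (u t @^-1` (if b then ~` [set ustar] else [set ustar])) =
  (if b then q else 1 - q)%:E.
Proof.
have prob_ustar : P (u t @^-1` [set ustar]) = (1 - q)%:E.
  rewrite u_law // -[Pu' _]fineK ?fin_num_measure // diracE mem_set //=.
  by rewrite -!EFinM -EFinD /q; congr (_%:E); ring.
case: b => //.
rewrite -preimage_setC probability_setC; last exact: measurable_u_preimage.
by rewrite prob_ustar -EFinB; congr (_%:E); ring.
Qed.

Lemma prob_corruption_pattern f :
  P (corruption_pattern f) = (bernoulli_weight q f)%:E.
Proof.
rewrite u_indep => [|t]; last exact: measurable_ustar_pattern.
by rewrite -prodEFin; apply: eq_bigr => t _; exact: prob_u_pattern.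
Qed.

Lemma prob_many_corruptions_le : (2 <= T)%N ->
  (P (many_corruptions (T%:R * (delta + ln T%:R / Num.sqrt T%:R)))
     <= (T%:R^-1)%:E)%E.
Proof.
move=> T_ge2; apply: le_trans (content_bigsetU_le P _ _ _ _) _.
  move=> f; apply: fin_bigcap_measurable; first exact: finite_finset.
  by move=> t _; exact: measurable_u_preimage.
rewrite (eq_bigr (fun f => (bernoulli_weight q f)%:E)); last first.
  by move=> f _; exact: prob_corruption_pattern.
rewrite sumEFin lee_fin bernoulli_tail_le_invn //.
by case/andP: delta01.
Qed.

End corruptions.

Lemma normr_sum_indicB_le_card {R : realType} {V : Type} {I : finType}
    (A B : I -> set V) (C : pred I) (v : V) :
  (forall i, ~~ C i -> A i = B i) ->
  `|\sum_i \1_(A i) v - \sum_i \1_(B i) v| <= #|C|%:R :> R.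
Proof.
move=> AB; rewrite -sumrB; apply: le_trans (ler_norm_sum _ _ _) _.
rewrite (bigID C) /= [X in _ + X]big1 ?addr0 => [|i /AB ->]; last first.
  by rewrite subrr normr0.
rewrite -sum1_card natr_sum; apply: ler_sum => i _.
by rewrite !indicE; case: (v \in A i); case: (v \in B i);
  rewrite /= ?subrr ?subr0 ?sub0r ?normrN ?normr0 ?normr1.
Qed.

Theorem proposition1 (R : realType) (d : measure_display) (Om : measurableType d)
  (P : probability Om R) (n T : nat) (delta : R) (ustar : n.-tuple R)
  (Pu' : probability (n.-tuple R) R) (Pab : probability (n.-tuple R * R)%type R)
  (alo : R) (xopt : n.-tuple R -> n.-tuple R -> R -> n.-tuple R)
  (u : 'I_T -> Om -> n.-tuple R) (ab : 'I_T -> Om -> (n.-tuple R * R)%type) :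
  (1 <= n)%N -> (1 <= T)%N ->
  0 <= delta <= 1 ->
  unit_sphere ustar ->
  Pu' (@unit_sphere R n) = 1%E ->
  0 < alo ->
  Pab [set p | (forall i, alo <= tnth p.1 i <= 1) /\ 0 <= p.2] = 1%E ->
  lp_selection xopt ->
  (forall t, measurable_fun setT (u t)) ->
  (forall t, measurable_fun setT (ab t)) ->
  (forall t B, measurable B ->
     P (u t @^-1` B) = ((1 - delta)%:E * \d_ustar B + delta%:E * Pu' B)%E) ->
  (forall t B, measurable B -> P (ab t @^-1` B) = Pab B) ->
  indep_two_families P u ab ->
  let Ut t w := [set v | unit_sphere v /\
      lp_optimal v (ab t w).1 (ab t w).2 (xopt (u t w) (ab t w).1 (ab t w).2)] in
  let Ubart t w := [set v | unit_sphere v /\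
      lp_optimal v (ab t w).1 (ab t w).2 (xopt ustar (ab t w).1 (ab t w).2)] in
  let E := [set w | forall v, unit_sphere v ->
      `| (T%:R)^-1 * \sum_(t < T) \1_(Ut t w) v
         - (T%:R)^-1 * \sum_(t < T) \1_(Ubart t w) v |
      <= delta + ln (T%:R) / Num.sqrt (T%:R)] in
  exists A : set Om, measurable A /\ A `<=` E /\ ((1 - (T%:R)^-1)%:E <= P A)%E.
Proof.
move=> _ T_ge1 delta01 _ _ _ _ _ measurable_u _ u_law _ indep Ut Ubart E.
have [T_ge2|T_lt2] := leqP 2 T; last first.
  have -> : T = 1%N by apply/eqP; rewrite eqn_leq T_ge1 -ltnS T_lt2.
  by exists set0; rewrite invr1 subrr measure0; split => //; split.
have T_gt0 : (0 : R) < T%:R by rewrite ltr0n (leq_trans _ T_ge2).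
pose c := T%:R * (delta + ln T%:R / Num.sqrt T%:R).
exists (~` many_corruptions ustar u c); split.
  exact/measurableC/measurable_many_corruptions.
split=> [w /few_corruptions few_w v _|].
  rewrite -mulrBr normrM ger0_norm ?invr_ge0 ?ler0n // ler_pdivrMl //.
  apply: le_trans few_w; apply: normr_sum_indicB_le_card => t.
  by rewrite negbK => /eqP u_ustar; rewrite /Ut /Ubart u_ustar.
rewrite probability_setC; last exact: measurable_many_corruptions.
rewrite EFinB leeB //.
apply: (prob_many_corruptions_le _ _ _ _ _ measurable_u delta01 u_law _ T_ge2).
exact: indep_two_families_fst indep.
Qed.
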